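(* Let $p,p'\ge 1$ be integers with $|p-p'|=1$, let $\alpha_{(p,p')}$ be the morphism $a\mapsto a^pb$, $b\mapsto a^{p'}b$, and let $Y$ be a finite word over $\{a,b\}$ such that $X=\alpha_{(p,p')}(Y)$ is a finite Sturmian word. Then: (i) $|K_{(X,a)}| = p|Y|_a + p'|Y|_b$; (ii) $|K_{(X,b)}| = |Y|$; (iii) $|K_{(X,aa)}| = (p-1)|Y|_a + (p'-1)|Y|_b$; (iv) $|K_X| = 2|X|-2|Y|$, and this equals $2|Y|_a+2p'|Y|$ when $p>p'$ and $2|Y|_b+2p|Y|$ when $p<p'$.
   Context: Words are over the alphabet $\{a,b\}$. A Sturmian word is a right-infinite aperiodic word over $\{a,b\}$ of minimal factor complexity (exactly $n+1$ distinct factors of each length $n$); a finite Sturmian word is a finite factor of some Sturmian word. $|X|$ is the length of $X$ and $|X|_l$ the number of occurrences of the letter $l$ in $X$; $X[i]$ is the letter at position $i$ and $X[i..j]$ the factor from position $i$ to $j$. A palindrome is a word equal to its reverse. Every palindrome has a center: its middle letter if its length is odd, its middle two letters if its length is even. For $c\in\{a,b,aa\}$, $K_{(X,c)}$ denotes the set of occurrences of $c$ in $X$, i.e. $\{(i,c): X[i..i+|c|-1]=c\}$; each such occurrence is regarded as the center of exactly one maximal palindrome occurrence (the longest palindromic factor of $X$ centered there), so $K_{(X,c)}$ is the set of maximal palindrome occurrences in $X$ with center $c$. $K_X=K_{(X,a)}\cup K_{(X,aa)}\cup K_{(X,b)}$. *)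

From HB Require Import structures.
From mathcomp Require Import all_boot.
Set Implicit Arguments. Unset Strict Implicit. Unset Printing Implicit Defensive.

Inductive letter := a | b.

Definition letter_eqb (x y : letter) : bool :=
  match x, y with a, a | b, b => true | _, _ => false end.
Lemma letter_eqP : Equality.axiom letter_eqb.
Proof. by case; case; constructor. Qed.
HB.instance Definition _ := hasDecEq.Build letter letter_eqP.

Definition word := seq letter.

Definition nocc (X : word) (l : letter) : nat := count_mem l X.

Definition infword := nat -> letter.

Definition ifactor (x : infword) (i n : nat) : word := mkseq (fun j => x (i + j)) n.

Definition complexity_succ (x : infword) (n : nat) : Prop :=
  exists s : seq word, [/\ uniq s, size s = n.+1 &
    forall w : word, w \in s <-> (exists i, ifactor x i n = w)].

Definition aperiodic (x : infword) : Prop :=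
  ~ (exists q N, 0 < q /\ forall i, N <= i -> x (i + q) = x i).

Definition sturmian (x : infword) : Prop :=
  aperiodic x /\ forall n, complexity_succ x n.

Definition finite_sturmian (X : word) : Prop :=
  exists x : infword, sturmian x /\ exists i, X = ifactor x i (size X).

Definition alpha (p p' : nat) (Y : word) : word :=
  flatten [seq (if l is a then nseq p a ++ [:: b] else nseq p' a ++ [:: b]) | l <- Y].

Definition Kc (X : word) (c : word) : seq (nat * word) :=
  [seq (i, c) | i <- iota 0 (size X) & take (size c) (drop i X) == c].

Definition KX (X : word) : seq (nat * word) :=
  undup (Kc X [:: a] ++ Kc X [:: a; a] ++ Kc X [:: b]).

From HB Require Import structures.
From mathcomp Require Import all_boot.
From mathcomp Require Import zify.

(* Since each occurrence of a center determines exactly one maximal palindrome,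
   the theorem counts occurrences of a, b and aa in alpha(Y).  Each letter l of Y contributes the block a^k b (k = p or p'),
   which holds k occurrences of a, one of b and k - 1 of aa, since no aa
   straddles the b closing a block. *)

Definition count_factor (c X : word) : nat :=
  count (fun i => take (size c) (drop i X) == c) (iota 0 (size X)).

Lemma size_Kc X c : size (Kc X c) = count_factor c X.
Proof. by rewrite size_map size_filter. Qed.

Lemma uniq_Kc X c : uniq (Kc X c).
Proof. by rewrite map_inj_uniq ?filter_uniq ?iota_uniq // => i j []. Qed.

Lemma size_KX X :
  size (KX X) = size (Kc X [:: a]) + size (Kc X [:: a; a]) + size (Kc X [:: b]).
Proof.
have tag_Kc c ic : ic \in Kc X c -> ic.2 = c by case/mapP=> i _ ->.
rewrite /KX undup_id ?size_cat ?addnA // !cat_uniq !uniq_Kc andbT /=.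
apply/andP; split; apply/hasPn => -[i c] /=.
  by rewrite mem_cat => /orP[] /tag_Kc /= ->; apply/negP => /tag_Kc.
by move=> /tag_Kc /= ->; apply/negP => /tag_Kc.
Qed.

Lemma count_factor_cons c x X :
  count_factor c (x :: X) = (take (size c) (x :: X) == c) + count_factor c X.
Proof. by rewrite /count_factor /= -(addn0 1) iotaDl count_map. Qed.

Lemma count_factor_letter l X : count_factor [:: l] X = nocc X l.
Proof.
elim: X => [|x X IH] //; rewrite count_factor_cons IH /= take0.
by case: x; case: l {IH}.
Qed.

Lemma count_factor_aa_block k V :
  count_factor [:: a; a] (nseq k a ++ b :: V) = k.-1 + count_factor [:: a; a] V.
Proof.
elim: k => [|k IH]; first by rewrite /= count_factor_cons.
rewrite /= count_factor_cons IH.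
by case: k {IH} => [|k] //=; rewrite take0 eqxx.
Qed.

Lemma nocc_a_add_b X : nocc X a + nocc X b = size X.
Proof. by elim: X => [|[] X IH] //=; rewrite -IH ?addnS. Qed.

Lemma alpha_cons p p' l Y :
  alpha p p' (l :: Y) = nseq (if l is a then p else p') a ++ b :: alpha p p' Y.
Proof. by case: l; rewrite /alpha /= -catA. Qed.

Section AlphaCounts.

Variables (p p' : nat).

Lemma nocc_alpha_a Y : nocc (alpha p p' Y) a = p * nocc Y a + p' * nocc Y b.
Proof.
elim: Y => [|l Y IH]; first by rewrite /nocc /= !muln0.
rewrite alpha_cons /nocc count_cat count_nseq /= -/(nocc _ _) IH /nocc /=.
by case: l => /=; lia.
Qed.

Lemma nocc_alpha_b Y : nocc (alpha p p' Y) b = size Y.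
Proof.
elim: Y => [|l Y IH] //.
by rewrite alpha_cons /nocc count_cat count_nseq /= -/(nocc _ _) IH.
Qed.

Lemma count_factor_aa_alpha Y :
  count_factor [:: a; a] (alpha p p' Y) = (p - 1) * nocc Y a + (p' - 1) * nocc Y b.
Proof.
elim: Y => [|l Y IH]; first by rewrite /nocc /= !muln0.
rewrite alpha_cons count_factor_aa_block IH /nocc /=.
by case: l => /=; lia.
Qed.

End AlphaCounts.

Theorem theorem1 (p p' : nat) (Y : word) :
  1 <= p -> 1 <= p' -> (p = p'.+1 \/ p' = p.+1) ->
  finite_sturmian (alpha p p' Y) ->
  let X := alpha p p' Y in
  [/\ size (undup (Kc X [:: a])) = p * nocc Y a + p' * nocc Y b,
      size (undup (Kc X [:: b])) = size Y,
      size (undup (Kc X [:: a; a])) = (p - 1) * nocc Y a + (p' - 1) * nocc Y b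
    & [/\ size (KX X) = 2 * size X - 2 * size Y,
          p > p' -> size (KX X) = 2 * nocc Y a + 2 * p' * size Y
        & p < p' -> size (KX X) = 2 * nocc Y b + 2 * p * size Y]].
Proof.
move=> p_gt0 p'_gt0 p_p' _ X.
have sizeX := nocc_a_add_b X; have sizeY := nocc_a_add_b Y.
rewrite size_KX !undup_id ?uniq_Kc // !size_Kc !count_factor_letter.
rewrite count_factor_aa_alpha -sizeX -sizeY !nocc_alpha_a !nocc_alpha_b -sizeY.
move: (nocc Y a) (nocc Y b) => na nb.
by case: p_p' => ->; split=> //; split; nia.
Qed.
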